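(* Let $M$ be an affine manifold (affine subspace) of $\mathbb{R}^n$ and let $f,g$ be quadratic functions on $\mathbb{R}^n$ (i.e., of the form $x^TQx+q^Tx+c$ with $Q$ real symmetric, $q\in\mathbb{R}^n$, $c\in\mathbb{R}$, no definiteness assumed). Then the set $$C:=\{(f(x),g(x)) : x\in M\}+\mathbb{R}^2_+$$ is convex. *)

From mathcomp Require Import all_boot all_order all_algebra.
From mathcomp Require Import reals.
Set Implicit Arguments. Unset Strict Implicit. Unset Printing Implicit Defensive.
Import Order.TTheory GRing.Theory Num.Theory.
Local Open Scope ring_scope.

Definition quad_fun (R : realType) (n : nat) (Q : 'M[R]_n) (q : 'cV[R]_n) (c : R)
  (x : 'cV[R]_n) : R :=
  (x^T *m Q *m x) 0 0 + (q^T *m x) 0 0 + c.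

Definition is_quadratic (R : realType) (n : nat) (f : 'cV[R]_n -> R) : Prop :=
  exists (Q : 'M[R]_n) (q : 'cV[R]_n) (c : R),
    Q^T = Q /\ forall x, f x = quad_fun Q q c x.

Definition affine_manifold (R : realType) (n : nat) (M : 'cV[R]_n -> Prop) : Prop :=
  (exists x, M x) /\
  forall x y (t : R), M x -> M y -> M ((1 - t) *: x + t *: y).

Definition image_plus_orthant (R : realType) (n : nat) (M : 'cV[R]_n -> Prop)
  (f g : 'cV[R]_n -> R) (p : R * R) : Prop :=
  exists x, M x /\ exists (u v : R), 0 <= u /\ 0 <= v /\
    p = (f x + u, g x + v).

Definition convex2 (R : realType) (C : R * R -> Prop) : Prop :=
  forall (a b : R * R) (t : R), C a -> C b -> 0 <= t <= 1 ->
    C ((1 - t) * a.1 + t * b.1, (1 - t) * a.2 + t * b.2).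

From mathcomp Require Import all_boot all_order all_algebra.
From mathcomp Require Import reals ring lra polyrcf.
Set Implicit Arguments. Unset Strict Implicit. Unset Printing Implicit Defensive.
Import Order.TTheory GRing.Theory Num.Theory.
Local Open Scope ring_scope.

(* On the segment z_s := (1 - s) x + s y a quadratic f equals
   f x + s (f y - f x) + a s (s - 1), with a := (y - x)^T Q (y - x), so
   f z_s - ((1 - t) f x + t f y) is the chord excess below with al := f y - f x.
   The point (1 - t) (f x, g x) + t (f y, g y) lies in C as soon as a single s
   makes the excesses of f and g both nonpositive.  If the slopes f y - f x
   and g y - g x have the same sign, s = 0 or s = 1 does.  Otherwise a
   positive combination of the two excesses is k s (s - 1), so a root of one
   excess at which k s (s - 1) <= 0 makes the other one nonpositive; such a
   root is given by the intermediate value theorem, inside [0, 1] if k >= 0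
   and outside it if k < 0. *)

Definition chord_excess (R : realType) (a al t s : R) : R :=
  a * s * (s - 1) + al * (s - t).

Section ChordExcess.

Variable R : realType.
Implicit Types a d al be t u v s : R.

Lemma chord_excess_at0 a al t : chord_excess a al t 0 = - (al * t).
Proof. by rewrite /chord_excess; ring. Qed.

Lemma chord_excess_at1 a al t : chord_excess a al t 1 = al * (1 - t).
Proof. by rewrite /chord_excess; ring. Qed.

Lemma chord_excess_root a al t u v : u <= v ->
  chord_excess a al t u * chord_excess a al t v <= 0 ->
  exists2 s, u <= s <= v & chord_excess a al t s = 0.
Proof.
move=> le_uv.
have hornerP s :
    (a *: ('X * ('X - 1)) + al *: ('X - t%:P)).[s] = chord_excess a al t s.
  by rewrite /chord_excess !hornerE.
rewrite -!hornerP => /(polyrcf.poly_ivt le_uv)[s].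
by rewrite in_itv /= => uv /rootP; rewrite hornerP; exists s.
Qed.

Lemma chord_excess_common_nonpos_opp a d al be t :
  0 < al -> be < 0 -> 0 <= t <= 1 ->
  exists s, chord_excess a al t s <= 0 /\ chord_excess d be t s <= 0.
Proof.
move=> al_gt0 be_lt0 /andP[t_ge0 t_le1].
set k := a * - be + d * al.
have comb s : - be * chord_excess a al t s + al * chord_excess d be t s =
              k * (s * (s - 1)).
  by rewrite /chord_excess /k; ring.
suff [s root_s k_s] : exists2 s,
    chord_excess a al t s = 0 \/ chord_excess d be t s = 0 &
    k * (s * (s - 1)) <= 0.
  exists s; have := comb s; case: root_s => -> comb_s; split; nra.
have [k_ge0 | k_lt0] := leP 0 k.
  have [|s /andP[s_ge0 s_le1] root_s] := @chord_excess_root a al t 0 1 ler01.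
    rewrite chord_excess_at0 chord_excess_at1 mulNr oppr_le0.
    by rewrite !mulr_ge0 ?subr_ge0 ?(ltW al_gt0).
  by exists s; [left | rewrite mulr_ge0_le0 // mulr_ge0_le0 // subr_le0].
have [a_lt0 | a_ge0] := ltP a 0.
  have s1_ge1 : 1 <= 1 - al / a.
    by rewrite lerDl oppr_ge0 pmulr_rle0 // invr_le0 ltW.
  have excess_s1 : chord_excess a al t (1 - al / a) = - (al * t).
    by rewrite /chord_excess; field; rewrite lt_eqF.
  have [|s /andP[s_ge1 _] root_s] := @chord_excess_root a al t _ _ s1_ge1.
    rewrite chord_excess_at1 excess_s1 mulrN oppr_le0.
    by rewrite !mulr_ge0 ?subr_ge0 ?(ltW al_gt0).
  exists s; first by left.
  by rewrite nmulr_rle0 // mulr_ge0 ?subr_ge0 // (le_trans ler01 s_ge1).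
have d_lt0 : d < 0 by rewrite /k in k_lt0; nra.
have s0_le0 : - be / d <= 0.
  by apply: mulr_ge0_le0; [rewrite oppr_ge0 | rewrite invr_le0]; apply: ltW.
have excess_s0 : chord_excess d be t (- be / d) = be * (1 - t).
  by rewrite /chord_excess; field; rewrite lt_eqF.
have [|s /andP[_ s_le0] root_s] := @chord_excess_root d be t _ _ s0_le0.
  rewrite excess_s0 chord_excess_at0 mulrN oppr_le0 mulr_le0 //.
  - by rewrite mulr_le0_ge0 ?subr_ge0 // ltW.
  - by rewrite mulr_le0_ge0 // ltW.
exists s; first by right.
by rewrite nmulr_rle0 // mulr_le0 ?subr_le0 // (le_trans s_le0 ler01).
Qed.

Lemma chord_excess_common_nonpos a d al be t : 0 <= t <= 1 ->
  exists s, chord_excess a al t s <= 0 /\ chord_excess d be t s <= 0.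
Proof.
move=> t01; have /andP[t_ge0 t_le1] := t01.
have [[al_ge0 be_ge0] | [[al_le0 be_le0] |
      [[al_gt0 be_lt0] | [al_lt0 be_gt0]]]] :
    (0 <= al /\ 0 <= be) \/ (al <= 0 /\ be <= 0) \/
    (0 < al /\ be < 0) \/ (al < 0 /\ 0 < be) by lra.
- by exists 0; rewrite !chord_excess_at0 !oppr_le0 !mulr_ge0.
- by exists 1; rewrite !chord_excess_at1 !mulr_le0_ge0 ?subr_ge0.
- exact: chord_excess_common_nonpos_opp.
- have [s [? ?]] := chord_excess_common_nonpos_opp d a be_gt0 al_lt0 t01.
  by exists s.
Qed.

End ChordExcess.

Lemma quad_fun_segment (R : realType) (n : nat) (Q : 'M[R]_n) (q : 'cV[R]_n)
    (c : R) (x y : 'cV[R]_n) (t s : R) :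
  quad_fun Q q c ((1 - s) *: x + s *: y) =
  (1 - t) * quad_fun Q q c x + t * quad_fun Q q c y +
  chord_excess (((y - x)^T *m Q *m (y - x)) 0 0)
               (quad_fun Q q c y - quad_fun Q q c x) t s.
Proof.
rewrite /chord_excess /quad_fun !raddfB !linearD !linearZ /=.
rewrite !(mulmxBl, mulmxBr, mulmxDl, mulmxDr, mulNmx, mulmxN).
by rewrite -!(scalemxAl, scalemxAr) !mxE; ring.
Qed.

Lemma quadratic_segment (R : realType) (n : nat) (f : 'cV[R]_n -> R) :
  is_quadratic f -> forall x y, exists a, forall t s,
  f ((1 - s) *: x + s *: y) =
  (1 - t) * f x + t * f y + chord_excess a (f y - f x) t s.
Proof.
move=> [Q [q [c [_ f_eq]]]] x y; eexists => t s.
by rewrite !f_eq; apply: quad_fun_segment.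
Qed.

Theorem theorem4p1 (R : realType) (n : nat) (M : 'cV[R]_n -> Prop)
  (f g : 'cV[R]_n -> R) :
  affine_manifold M -> is_quadratic f -> is_quadratic g ->
  convex2 (image_plus_orthant M f g).
Proof.
move=> [_ M_affine] f_quad g_quad.
move=> _ _ t [x [Mx [u1 [v1 [u1_ge0 [v1_ge0 ->]]]]]]
  [y [My [u2 [v2 [u2_ge0 [v2_ge0 ->]]]]]] t01 /=.
have [a f_seg] := quadratic_segment f_quad x y.
have [d g_seg] := quadratic_segment g_quad x y.
have [s [f_excess g_excess]] :=
  chord_excess_common_nonpos a d (f y - f x) (g y - g x) t01.
have /andP[t_ge0 t_le1] := t01.
exists ((1 - s) *: x + s *: y); split; first exact: M_affine.
exists ((1 - t) * u1 + t * u2 - chord_excess a (f y - f x) t s).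
exists ((1 - t) * v1 + t * v2 - chord_excess d (g y - g x) t s).
split; first nra.
split; first nra.
by rewrite (f_seg t) (g_seg t); congr (_, _); ring.
Qed.
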